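(* Let $d\geq 10$ and let $g\in C^\infty([0,\infty))$ solve $$g''+\left(\frac{d-3}{y}-\frac{y}{2}\right)g'-\frac{d-2}{y^2}\,g(g-1)(g-2)=0\quad (y>0)$$ with $g(0)=g'(0)=0$ and $g''(0)=a>0$. Let $h(y)=y^3g'(y)$. Then $h'(y)>0$ for all $y>0$, and $\lim_{y\to\infty}h(y)=+\infty$. *)

From Stdlib Require Import Reals Lra.
Open Scope R_scope.

Definition right_deriv (f : R -> R) (x l : R) : Prop :=
  forall eps : R, 0 < eps -> exists delta : R, 0 < delta /\
    forall t : R, 0 < t < delta -> Rabs ((f (x + t) - f x) / t - l) < eps.

(* [smooth_on_nonneg f D]: f is C^infinity on [0, oo), with D n = f^(n) on
   [0, oo): D 0 = f there, each D n is differentiable at every x > 0 with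
   derivative D (n+1) x, and has right derivative D (n+1) 0 at 0.
   (Values of f, D n at negative arguments are irrelevant.) *)
Definition smooth_on_nonneg (f : R -> R) (D : nat -> R -> R) : Prop :=
  (forall x : R, 0 <= x -> D 0%nat x = f x) /\
  (forall (n : nat) (x : R), 0 < x -> derivable_pt_lim (D n) x (D (S n) x)) /\
  (forall n : nat, right_deriv (D n) 0 (D (S n) 0)).

From Stdlib Require Import Reals Lra Lia.
Open Scope R_scope.

(* With p = g' and G = g, the equation turns h = y^3 p into
   h' = dh3 := (6 - d + y^2/2) y^2 p + (d - 2) y G (G - 1) (G - 2), and
   (y^(d-7) e^(-y^2/4) dh3)' = y^(d-7) e^(-y^2/4) C h  with
   C = (d - 10 + 3 (d - 2) (G - 1)^2) / y^2 >= 0  for d >= 10.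
   Near 0, dh3 ~ 4 a y^3 > 0 and h > 0.  While dh3 stays positive, h increases,
   so y^(d-7) e^(-y^2/4) dh3 is nondecreasing and dh3 cannot reach 0.  Since
   y^(d-7) e^(-y^2/4) is bounded, dh3 is bounded below on [1, oo) by a positive
   constant, so h grows at least linearly. *)

Lemma derivable_pt_lim_eq_value f x l l' :
  derivable_pt_lim f x l -> l = l' -> derivable_pt_lim f x l'.
Proof. intros H <-; exact H. Qed.

Lemma derivable_pt_lim_exp_comp f x l : derivable_pt_lim f x l ->
  derivable_pt_lim (fun y => exp (f y)) x (exp (f x) * l).
Proof.
  intros Hf. eapply derivable_pt_lim_eq_value.
  - apply (derivable_pt_lim_comp f exp); [exact Hf | apply derivable_pt_lim_exp].
  - ring.
Qed.

Ltac derive := repeat first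
  [ eassumption | apply derivable_pt_lim_plus | apply derivable_pt_lim_minus
  | apply derivable_pt_lim_mult | apply derivable_pt_lim_opp
  | apply derivable_pt_lim_exp_comp | apply derivable_pt_lim_pow
  | apply derivable_pt_lim_id | apply derivable_pt_lim_const ].

Lemma MVT_lower_bound f f' a b c : a <= b ->
  (forall x, a <= x <= b -> derivable_pt_lim f x (f' x)) ->
  (forall x, a < x < b -> c <= f' x) -> f a + c * (b - a) <= f b.
Proof.
  intros [Hab | <-] Hf Hc; [| lra].
  destruct (MVT_cor2 f f' a b Hab Hf) as [x [Hfx Hx]].
  assert (c * (b - a) <= f' x * (b - a)) by (apply Rmult_le_compat_r; [lra | apply Hc; lra]).
  lra.
Qed.

Lemma right_deriv_continuous f x l : right_deriv f x l ->
  forall eps, 0 < eps -> exists delta, 0 < delta /\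
    forall t, 0 < t < delta -> Rabs (f (x + t) - f x) < eps.
Proof.
  intros Hf eps Heps.
  destruct (Hf 1 Rlt_0_1) as [delta [Hdelta Hclose]].
  assert (Hl : 0 < 1 + Rabs l) by (pose proof (Rabs_pos l); lra).
  exists (Rmin delta (eps / (1 + Rabs l))).
  split; [apply Rmin_glb_lt; [lra | apply Rdiv_lt_0_compat; lra] |].
  intros t [Ht Htd].
  assert (Htdelta : t < delta) by (eapply Rlt_le_trans; [exact Htd | apply Rmin_l]).
  assert (Hteps : t * (1 + Rabs l) < eps).
  { apply Rlt_le_trans with (eps / (1 + Rabs l) * (1 + Rabs l)); [| right; field; lra].
    apply Rmult_lt_compat_r; [lra |]. eapply Rlt_le_trans; [exact Htd | apply Rmin_r]. }
  specialize (Hclose t (conj Ht Htdelta)).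
  replace (f (x + t) - f x) with (t * ((f (x + t) - f x) / t - l) + t * l) by (field; lra).
  eapply Rle_lt_trans; [apply Rabs_triang |].
  rewrite !Rabs_mult, Rabs_right by lra.
  assert (t * Rabs ((f (x + t) - f x) / t - l) <= t * 1) by (apply Rmult_le_compat_l; lra).
  lra.
Qed.

Lemma derivable_pt_lim_right_deriv f x l :
  derivable_pt_lim f x l -> right_deriv f x l.
Proof.
  intros Hf eps Heps. destruct (Hf eps Heps) as [delta Hdelta].
  exists delta. split; [apply cond_pos |].
  intros t [Ht Htd]. apply Hdelta; [lra | rewrite Rabs_right; lra].
Qed.

Lemma le_of_deriv_le_right f g f' g' lf lg y : 0 < y ->
  right_deriv f 0 lf -> right_deriv g 0 lg -> f 0 <= g 0 ->
  (forall x, 0 < x -> derivable_pt_lim f x (f' x)) ->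
  (forall x, 0 < x -> derivable_pt_lim g x (g' x)) ->
  (forall x, 0 < x < y -> f' x <= g' x) -> f y <= g y.
Proof.
  intros Hy Hf0 Hg0 H0 Hf Hg Hle.
  destruct (Rle_or_lt (f y) (g y)) as [| Hlt]; [assumption | exfalso].
  set (e := (f y - g y) / 2).
  destruct (right_deriv_continuous f 0 lf Hf0 e ltac:(unfold e; lra)) as [df [Hdf Hfc]].
  destruct (right_deriv_continuous g 0 lg Hg0 e ltac:(unfold e; lra)) as [dg [Hdg Hgc]].
  set (s := Rmin y (Rmin df dg) / 2).
  assert (Hmin : 0 < Rmin y (Rmin df dg)) by (apply Rmin_glb_lt; [| apply Rmin_glb_lt]; lra).
  assert (Hs : 0 < s < y) by (pose proof (Rmin_l y (Rmin df dg)); unfold s; lra).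
  assert (Hsd : s < df /\ s < dg).
  { pose proof (Rmin_r y (Rmin df dg)). pose proof (Rmin_l df dg). pose proof (Rmin_r df dg).
    unfold s; lra. }
  specialize (Hfc s ltac:(lra)). specialize (Hgc s ltac:(lra)).
  rewrite Rplus_0_l in Hfc, Hgc.
  apply Rabs_def2 in Hfc. apply Rabs_def2 in Hgc.
  assert (Hmono : (g s - f s) + 0 * (y - s) <= g y - f y).
  { apply (MVT_lower_bound (fun x => g x - f x) (fun x => g' x - f' x)); [lra | |].
    - intros x Hx. apply derivable_pt_lim_minus; [apply Hg | apply Hf]; lra.
    - intros x Hx. pose proof (Hle x ltac:(lra)). lra. }
  unfold e in *. lra.
Qed.

Lemma continuity_pt_pos_nbhd f x : continuity_pt f x -> 0 < f x ->
  exists delta, 0 < delta /\ forall z, Rabs (z - x) < delta -> 0 < f z.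
Proof.
  intros Hc Hf. destruct (Hc (f x) Hf) as [delta [Hdelta Hclose]].
  exists delta; split; [exact Hdelta |]. intros z Hz.
  destruct (Req_dec z x) as [-> | Hne]; [exact Hf |].
  assert (Rabs (f z - f x) < f x) by (apply Hclose; split; [split; [exact I | auto] | exact Hz]).
  apply Rabs_def2 in H. lra.
Qed.

Lemma first_nonpositive W a z : a < z ->
  (forall x, a <= x <= z -> continuity_pt W x) -> 0 < W a -> W z <= 0 ->
  exists t, a < t <= z /\ W t <= 0 /\ forall s, a <= s < t -> 0 < W s.
Proof.
  intros Haz HW Ha Hz.
  set (L := fun t => a <= t <= z /\ forall s, a <= s <= t -> 0 < W s).
  assert (La : L a) by (split; [lra | intros s Hs; replace s with a by lra; exact Ha]).
  destruct (completeness L) as [t [Hub Hlub]].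
  { exists z. intros x [Hx _]. lra. }
  { exists a. exact La. }
  assert (Hat : a <= t) by (apply Hub, La).
  assert (Htz : t <= z) by (apply Hlub; intros x [Hx _]; lra).
  assert (Hbelow : forall s, a <= s < t -> 0 < W s).
  { intros s Hs. destruct (Rlt_or_le 0 (W s)) as [| Hws]; [assumption | exfalso].
    assert (t <= s); [| lra]. apply Hlub. intros x [Hx Hpos].
    destruct (Rle_or_lt x s) as [| Hsx]; [assumption |].
    specialize (Hpos s ltac:(lra)). lra. }
  assert (Ht : W t <= 0).
  { destruct (Rlt_or_le 0 (W t)) as [Hwt |]; [exfalso | assumption].
    destruct (Req_dec t z) as [-> | Htz']; [lra |].
    destruct (continuity_pt_pos_nbhd W t (HW t ltac:(lra)) Hwt) as [delta [Hdelta Hnbhd]].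
    set (t' := t + Rmin (delta / 2) (z - t)).
    assert (Hstep : 0 < Rmin (delta / 2) (z - t)) by (apply Rmin_glb_lt; lra).
    pose proof (Rmin_l (delta / 2) (z - t)). pose proof (Rmin_r (delta / 2) (z - t)).
    assert (L t').
    { split; [unfold t'; lra |]. intros s Hs.
      destruct (Rlt_or_le s t); [apply Hbelow; lra |].
      apply Hnbhd. unfold t' in Hs. rewrite Rabs_right; lra. }
    assert (t' <= t) by (apply Hub; assumption). unfold t' in *. lra. }
  exists t. split; [| split; assumption].
  split; [| assumption]. destruct Hat as [| <-]; [assumption | lra].
Qed.

Lemma positivity_propagates (W H F E K : R -> R) eps :
  0 < eps ->
  (forall y, 0 < y -> derivable_pt_lim H y (W y)) ->
  (forall y, 0 < y -> continuity_pt W y) ->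
  (forall y, 0 < y -> derivable_pt_lim F y (K y * H y)) ->
  (forall y, 0 < y -> 0 <= K y) ->
  (forall y, 0 < y -> F y = E y * W y /\ 0 < E y) ->
  0 < W eps -> 0 < H eps ->
  forall z, eps <= z -> 0 < W z.
Proof.
  intros Heps HH HW HF HK HE HWe HHe z Hz.
  destruct (Rlt_or_le 0 (W z)) as [| Hwz]; [assumption | exfalso].
  destruct Hz as [Hz | <-]; [| lra].
  destruct (first_nonpositive W eps z Hz) as [t [Ht [Hwt Hbelow]]];
    [intros x Hx; apply HW; lra | assumption | assumption |].
  assert (HHpos : forall s, eps <= s <= t -> 0 < H s).
  { intros s Hs. enough (H eps + 0 * (s - eps) <= H s) by lra.
    apply (MVT_lower_bound H W); [lra | intros x Hx; apply HH; lra |].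
    intros x Hx. left. apply Hbelow. lra. }
  assert (HFmono : F eps + 0 * (t - eps) <= F t).
  { apply (MVT_lower_bound F (fun y => K y * H y)); [lra | intros x Hx; apply HF; lra |].
    intros x Hx. apply Rmult_le_pos; [apply HK; lra | left; apply HHpos; lra]. }
  destruct (HE t ltac:(lra)) as [HFt HEt]. destruct (HE eps Heps) as [HFe HEe].
  assert (E t * W t <= 0) by (assert (0 <= E t * - W t) by (apply Rmult_le_pos; lra); lra).
  assert (0 < E eps * W eps) by (apply Rmult_lt_0_compat; lra).
  lra.
Qed.

Lemma unbounded_of_deriv_ge_pos H W y0 c : 0 < c ->
  (forall y, y0 <= y -> derivable_pt_lim H y (W y)) ->
  (forall y, y0 <= y -> c <= W y) ->
  forall M, exists Y, forall y, Y < y -> M < H y.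
Proof.
  intros Hc HH HW M.
  exists (y0 + Rabs (M - H y0) / c). intros y Hy.
  assert (Hr : 0 <= Rabs (M - H y0) / c)
    by (apply Rmult_le_pos; [apply Rabs_pos | left; apply Rinv_0_lt_compat; lra]).
  assert (Hlow : H y0 + c * (y - y0) <= H y).
  { apply (MVT_lower_bound H W); [lra | intros x Hx; apply HH; lra |].
    intros x Hx. apply HW. lra. }
  assert (Rabs (M - H y0) < c * (y - y0)).
  { replace (Rabs (M - H y0)) with (c * (Rabs (M - H y0) / c)) by (field; lra).
    apply Rmult_lt_compat_l; lra. }
  pose proof (RRle_abs (M - H y0)). lra.
Qed.

Lemma pow_le_exp_sq m y : (1 <= m)%nat -> 0 <= y ->
  y ^ m <= (4 * INR m) ^ m * exp (y ^ 2 / 4).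
Proof.
  intros Hm Hy. set (c := 4 * INR m).
  assert (Hc : 4 <= c) by (unfold c; apply le_INR in Hm; simpl in Hm; lra).
  assert (Hlin : y / c <= exp (y ^ 2 / c)).
  { apply Rle_trans with (1 + y ^ 2 / c); [| apply exp_ineq1_le].
    apply Rmult_le_reg_r with c; [lra |]. unfold Rdiv.
    rewrite Rmult_plus_distr_r, !Rmult_assoc, Rinv_l, !Rmult_1_r by lra. simpl. nra. }
  assert (Hexp : exp (y ^ 2 / c) ^ m = exp (y ^ 2 / 4)).
  { rewrite <- Rpower_pow by apply exp_pos. unfold Rpower. rewrite ln_exp.
    f_equal. unfold c in *. field. lra. }
  replace (y ^ m) with (c ^ m * (y / c) ^ m)
    by (rewrite <- Rpow_mult_distr; f_equal; field; lra).
  rewrite <- Hexp. apply Rmult_le_compat_l; [apply pow_le; lra |].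
  apply pow_incr. split; [| exact Hlin].
  apply Rmult_le_pos; [lra | left; apply Rinv_0_lt_compat; lra].
Qed.

Lemma dh3_expr_pos_of_bounds n a y P g :
  10 <= n -> 0 < a -> 0 < y -> (n - 2) * a * y ^ 2 <= 1 ->
  a * (1 - / n) * y <= P <= a * (1 + / n) * y ->
  a * (1 - / n) * y ^ 2 / 2 <= g <= a * (1 + / n) * y ^ 2 / 2 ->
  0 < (6 - n + y ^ 2 / 2) * y ^ 2 * P + (n - 2) * y * (g * (g - 1) * (g - 2)).
Proof.
  intros Hn Ha Hy Hsmall [HP1 HP2] [Hg1 Hg2].
  set (e := / n) in *.
  assert (Hne : n * e = 1) by (unfold e; field; lra).
  assert (He : 0 < e <= / 10).
  { split; unfold e; [apply Rinv_0_lt_compat; lra | apply Rinv_le_contravar; lra]. }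
  assert (Hy2 : 0 < y ^ 2) by (apply pow_lt; lra).
  assert (Hae : 0 < a * (1 - e)) by nra.
  assert (Hg0 : 0 <= g) by (assert (0 <= a * (1 - e) * y ^ 2) by nra; lra).
  assert (HP0 : 0 < P) by (assert (0 < a * (1 - e) * y) by nra; lra).
  assert (Hquart : 0 <= y ^ 2 / 2 * y ^ 2 * P) by (apply Rmult_le_pos; nra).
  assert (Hlin : (6 - n) * y ^ 2 * (a * (1 + e) * y) <= (6 - n) * y ^ 2 * P).
  { assert (0 <= (n - 6) * y ^ 2 * (a * (1 + e) * y - P)) by (apply Rmult_le_pos; nra). nra. }
  assert (Hcubic : 2 * g - 3 * g ^ 2 <= g * (g - 1) * (g - 2)) by nra.
  assert (Hsq : g ^ 2 <= (a * (1 + e) * y ^ 2 / 2) ^ 2) by nra.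
  assert (Hquad :
    a * (1 - e) * y ^ 2 - 3 * (a * (1 + e) * y ^ 2 / 2) ^ 2 <= 2 * g - 3 * g ^ 2) by nra.
  (* With n e = 1 the linear terms add up to (2 + 8 e) a y^3; the cubic ones are O(a^2 y^5). *)
  assert (Hsum :
    a * y ^ 3 * (4 + 8 * e - 2 * (n * e) - 3 / 4 * (1 + e) ^ 2 * ((n - 2) * a * y ^ 2))
    = (6 - n) * y ^ 2 * (a * (1 + e) * y)
      + (n - 2) * y * (a * (1 - e) * y ^ 2 - 3 * (a * (1 + e) * y ^ 2 / 2) ^ 2)).
  { field. }
  rewrite Hne in Hsum.
  assert (Hpos :
    0 < a * y ^ 3 * (4 + 8 * e - 2 * 1 - 3 / 4 * (1 + e) ^ 2 * ((n - 2) * a * y ^ 2))).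
  { apply Rmult_lt_0_compat; [apply Rmult_lt_0_compat; [lra | apply pow_lt; lra] |].
    assert (0 <= (n - 2) * a * y ^ 2) by nra. nra. }
  assert (0 <= (n - 2) * y * (g * (g - 1) * (g - 2)
                 - (a * (1 - e) * y ^ 2 - 3 * (a * (1 + e) * y ^ 2 / 2) ^ 2)))
    by (apply Rmult_le_pos; nra).
  nra.
Qed.

Definition weight (m : nat) (y : R) := y ^ m * exp (- (y ^ 2 / 4)).

Lemma weight_pos m y : 0 < y -> 0 < weight m y.
Proof. intros Hy. apply Rmult_lt_0_compat; [apply pow_lt; lra | apply exp_pos]. Qed.

Lemma weight_le m y : (1 <= m)%nat -> 0 <= y -> weight m y <= (4 * INR m) ^ m.
Proof.
  intros Hm Hy. unfold weight. rewrite exp_Ropp.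
  apply Rmult_le_reg_r with (exp (y ^ 2 / 4)); [apply exp_pos |].
  rewrite Rmult_assoc, Rinv_l by (apply Rgt_not_eq, exp_pos).
  rewrite Rmult_1_r. apply pow_le_exp_sq; assumption.
Qed.

Section Equation.

Variables (n a : R) (m : nat) (G p q : R -> R).

Hypothesis G_deriv : forall y, 0 < y -> derivable_pt_lim G y (p y).
Hypothesis p_deriv : forall y, 0 < y -> derivable_pt_lim p y (q y).
Hypothesis equation : forall y, 0 < y ->
  q y + ((n - 3) / y - y / 2) * p y - (n - 2) / y ^ 2 * (G y * (G y - 1) * (G y - 2)) = 0.

Definition h3 y := y ^ 3 * p y.
Definition dh3 y :=
  (6 - n + y ^ 2 / 2) * y ^ 2 * p y + (n - 2) * y * (G y * (G y - 1) * (G y - 2)).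
Definition dh3_coef y := (n - 10 + 3 * (n - 2) * (G y - 1) ^ 2) / y ^ 2.

Lemma h3_deriv y : 0 < y -> derivable_pt_lim h3 y (dh3 y).
Proof.
  intros Hy. pose proof (p_deriv y Hy). pose proof (equation y Hy).
  eapply derivable_pt_lim_eq_value; [unfold h3; derive |].
  unfold dh3. simpl.
  replace (q y) with (- ((n - 3) / y - y / 2) * p y
    + (n - 2) / y ^ 2 * (G y * (G y - 1) * (G y - 2))) by lra.
  field. lra.
Qed.

Lemma dh3_deriv y : 0 < y ->
  derivable_pt_lim dh3 y ((7 - n + y ^ 2 / 2) / y * dh3 y + dh3_coef y * h3 y).
Proof.
  intros Hy. pose proof (G_deriv y Hy). pose proof (p_deriv y Hy). pose proof (equation y Hy).
  eapply derivable_pt_lim_eq_value; [unfold dh3; derive |].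
  unfold dh3, dh3_coef, h3. simpl.
  replace (q y) with (- ((n - 3) / y - y / 2) * p y
    + (n - 2) / y ^ 2 * (G y * (G y - 1) * (G y - 2))) by lra.
  field. lra.
Qed.

Hypothesis m_eq : INR m = n - 7.

(* The weight y^m e^(-y^2/4) is the integrating factor removing the dh3 term from dh3'. *)
Lemma weighted_dh3_deriv y : 0 < y ->
  derivable_pt_lim (fun y => weight m y * dh3 y) y (weight m y * dh3_coef y * h3 y).
Proof.
  intros Hy. pose proof (dh3_deriv y Hy).
  eapply derivable_pt_lim_eq_value; [unfold weight; derive |].
  unfold weight. replace n with (INR m + 7) by lra.
  destruct m as [| k]; [| rewrite S_INR]; simpl; field; lra.
Qed.

Hypothesis n_ge_10 : 10 <= n.

Lemma dh3_coef_nonneg y : 0 < y -> 0 <= dh3_coef y.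
Proof.
  intros Hy. unfold dh3_coef. apply Rmult_le_pos; [| left; apply Rinv_0_lt_compat, pow_lt; lra].
  assert (0 <= (n - 2) * (G y - 1) ^ 2) by (apply Rmult_le_pos; [lra | apply pow2_ge_0]).
  lra.
Qed.

Hypotheses (a_pos : 0 < a) (G_0 : G 0 = 0) (p_0 : p 0 = 0)
  (G_right : right_deriv G 0 0) (p_right : right_deriv p 0 a).

Lemma dh3_pos_near_zero :
  exists eps, 0 < eps /\ forall y, 0 < y <= eps -> 0 < dh3 y /\ 0 < p y.
Proof.
  set (e := / n).
  assert (He : 0 < e) by (apply Rinv_0_lt_compat; lra).
  assert (He1 : e < 1) by (unfold e; rewrite <- Rinv_1; apply Rinv_lt_contravar; lra).
  destruct (p_right (a * e) ltac:(nra)) as [d1 [Hd1 Hp_close]].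
  assert (Hp_bounds : forall x, 0 < x < d1 -> a * (1 - e) * x <= p x <= a * (1 + e) * x).
  { intros x Hx. specialize (Hp_close x Hx).
    rewrite Rplus_0_l, p_0, Rminus_0_r in Hp_close. apply Rabs_def2 in Hp_close.
    replace (p x) with (p x / x * x) by (field; lra). split; nra. }
  assert (Hsq_deriv : forall k x, derivable_pt_lim (fun y => k * y ^ 2 / 2) x (k * x)).
  { intros k x. eapply derivable_pt_lim_eq_value; [derive | simpl; field]. }
  assert (Hsq_right : forall k, right_deriv (fun y => k * y ^ 2 / 2) 0 0).
  { intros k. apply derivable_pt_lim_right_deriv.
    eapply derivable_pt_lim_eq_value; [apply Hsq_deriv | ring]. }
  set (K := / ((n - 2) * a + 1)).
  assert (HK : 0 < K < 1).
  { unfold K. split; [apply Rinv_0_lt_compat; nra |].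
    rewrite <- Rinv_1. apply Rinv_lt_contravar; nra. }
  assert (HK_small : (n - 2) * a * K < 1)
    by (unfold K; apply Rmult_lt_reg_r with ((n - 2) * a + 1); [nra |];
        rewrite Rmult_assoc, Rinv_l by nra; lra).
  exists (Rmin (d1 / 2) K).
  pose proof (Rmin_l (d1 / 2) K). pose proof (Rmin_r (d1 / 2) K).
  split; [apply Rmin_glb_lt; lra |]. intros y Hy.
  assert (HGlow : a * (1 - e) * y ^ 2 / 2 <= G y).
  { apply (le_of_deriv_le_right (fun x => a * (1 - e) * x ^ 2 / 2) G
             (fun x => a * (1 - e) * x) p 0 0);
      [lra | apply Hsq_right | exact G_right | rewrite G_0; simpl; lra
      | intros x _; apply Hsq_deriv | exact G_deriv | intros x Hx; apply Hp_bounds; lra]. }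
  assert (HGup : G y <= a * (1 + e) * y ^ 2 / 2).
  { apply (le_of_deriv_le_right G (fun x => a * (1 + e) * x ^ 2 / 2)
             p (fun x => a * (1 + e) * x) 0 0);
      [lra | exact G_right | apply Hsq_right | rewrite G_0; simpl; lra
      | exact G_deriv | intros x _; apply Hsq_deriv | intros x Hx; apply Hp_bounds; lra]. }
  assert (Hsmall : (n - 2) * a * y ^ 2 <= 1).
  { assert (y ^ 2 <= K) by (simpl; nra).
    assert ((n - 2) * a * y ^ 2 <= (n - 2) * a * K) by (apply Rmult_le_compat_l; nra). lra. }
  pose proof (Hp_bounds y ltac:(lra)).
  split; [apply (dh3_expr_pos_of_bounds n a y); unfold e in *; try split; lra |].
  assert (0 < a * (1 - e) * y) by (apply Rmult_lt_0_compat; [apply Rmult_lt_0_compat |]; lra).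
  lra.
Qed.

Lemma dh3_pos y : 0 < y -> 0 < dh3 y.
Proof.
  destruct dh3_pos_near_zero as [eps [Heps Hnear]]. intros Hy.
  destruct (Rle_or_lt y eps) as [Hye | Hye]; [apply Hnear; lra |].
  apply (positivity_propagates dh3 h3 (fun y => weight m y * dh3 y) (weight m)
           (fun y => weight m y * dh3_coef y) eps); try lra.
  - exact h3_deriv.
  - intros x Hx. exact (derivable_continuous_pt dh3 x (exist _ _ (dh3_deriv x Hx))).
  - exact weighted_dh3_deriv.
  - intros x Hx. apply Rmult_le_pos; [left; apply weight_pos | apply dh3_coef_nonneg]; exact Hx.
  - intros x Hx. split; [reflexivity | apply weight_pos, Hx].
  - apply Hnear; lra.
  - apply Rmult_lt_0_compat; [apply pow_lt | apply Hnear]; lra.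
Qed.

Lemma h3_pos y : 0 < y -> 0 < h3 y.
Proof.
  destruct dh3_pos_near_zero as [eps [Heps Hnear]]. intros Hy.
  assert (Heps_pos : 0 < h3 eps) by (apply Rmult_lt_0_compat; [apply pow_lt | apply Hnear]; lra).
  destruct (Rle_or_lt y eps) as [Hye | Hye].
  - apply Rmult_lt_0_compat; [apply pow_lt | apply Hnear]; lra.
  - enough (h3 eps + 0 * (y - eps) <= h3 y) by lra.
    apply (MVT_lower_bound h3 dh3); [lra | intros x Hx; apply h3_deriv; lra |].
    intros x Hx. left. apply dh3_pos. lra.
Qed.

Lemma dh3_ge_pos_const : exists c, 0 < c /\ forall y, 1 <= y -> c <= dh3 y.
Proof.
  assert (Hm : (1 <= m)%nat) by (apply INR_le; simpl; lra).
  set (B := (4 * INR m) ^ m).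
  assert (HB : 0 < B) by (apply pow_lt; apply le_INR in Hm; simpl in Hm; lra).
  set (F1 := weight m 1 * dh3 1).
  assert (HF1 : 0 < F1) by (apply Rmult_lt_0_compat; [apply weight_pos | apply dh3_pos]; lra).
  exists (F1 / B). split; [apply Rdiv_lt_0_compat; assumption |].
  intros y Hy.
  assert (Hmono : F1 + 0 * (y - 1) <= weight m y * dh3 y).
  { apply (MVT_lower_bound (fun y => weight m y * dh3 y)
             (fun y => weight m y * dh3_coef y * h3 y));
      [lra | intros x Hx; apply weighted_dh3_deriv; lra |].
    intros x Hx. apply Rmult_le_pos; [apply Rmult_le_pos |].
    - left. apply weight_pos. lra.
    - apply dh3_coef_nonneg. lra.
    - left. apply h3_pos. lra. }
  assert (Hw : 0 < weight m y) by (apply weight_pos; lra).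
  assert (HwB : weight m y <= B) by (apply weight_le; [assumption | lra]).
  apply Rmult_le_reg_l with (weight m y); [assumption |].
  apply Rle_trans with (B * (F1 / B)).
  - apply Rmult_le_compat_r; [left; apply Rdiv_lt_0_compat |]; lra.
  - replace (B * (F1 / B)) with F1 by (field; lra). lra.
Qed.

Theorem h3_increasing_unbounded :
  (forall y, 0 < y -> exists l, derivable_pt_lim h3 y l /\ 0 < l) /\
  (forall M, exists Y, forall y, Y < y -> M < h3 y).
Proof.
  split.
  - intros y Hy. exists (dh3 y). split; [apply h3_deriv | apply dh3_pos]; exact Hy.
  - destruct dh3_ge_pos_const as [c [Hc Hlow]].
    apply (unbounded_of_deriv_ge_pos h3 dh3 1 c Hc); [| exact Hlow].
    intros y Hy. apply h3_deriv. lra.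
Qed.

End Equation.

Theorem mainTheorem6 (d : nat) (a : R) (g : R -> R) (D : nat -> R -> R) :
  (10 <= d)%nat ->
  smooth_on_nonneg g D ->
  (forall y : R, 0 < y ->
     D 2%nat y + ((INR d - 3) / y - y / 2) * D 1%nat y
       - (INR d - 2) / (y ^ 2) * (g y * (g y - 1) * (g y - 2)) = 0) ->
  g 0 = 0 -> D 1%nat 0 = 0 -> D 2%nat 0 = a -> 0 < a ->
  let h := fun y : R => y ^ 3 * D 1%nat y in
  (forall y : R, 0 < y -> exists l : R, derivable_pt_lim h y l /\ 0 < l) /\
  (forall M : R, exists Y : R, forall y : R, Y < y -> M < h y).
Proof.
  intros Hd [HD0 [HD_deriv HD_right]] Hode Hg0 Hp0 Hq0 Ha h.
  assert (Hn : 10 <= INR d) by (apply le_INR in Hd; simpl in Hd; lra).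
  assert (Hm : INR (d - 7) = INR d - 7) by (rewrite minus_INR by lia; simpl; ring).
  assert (Hequation : forall y, 0 < y -> D 2%nat y + ((INR d - 3) / y - y / 2) * D 1%nat y
    - (INR d - 2) / y ^ 2 * (D 0%nat y * (D 0%nat y - 1) * (D 0%nat y - 2)) = 0)
    by (intros y Hy; rewrite HD0 by lra; apply Hode, Hy).
  assert (HG0 : D 0%nat 0 = 0) by (rewrite HD0 by lra; exact Hg0).
  pose proof (HD_right 0%nat) as HG_right. rewrite Hp0 in HG_right.
  pose proof (HD_right 1%nat) as Hp_right. rewrite Hq0 in Hp_right.
  pose proof (HD_deriv 0%nat) as HG_deriv. pose proof (HD_deriv 1%nat) as Hp_deriv.
  exact (h3_increasing_unbounded _ _ (d - 7) _ _ _ HG_deriv Hp_deriv Hequation Hm Hn Ha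
           HG0 Hp0 HG_right Hp_right).
Qed.
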